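(* Let $k$ be a positive integer such that $k+1$ is an odd prime, and let $p>k(k+1)$ be an odd prime. For every $\mathbf v\in N_k$ there exist $s\in\mathbb{Z}_{k+1}$ and $r\in\mathbb{Z}$ such that, working modulo $k+1$, every coordinate of $s\mathbf v+\mathbf r_k\!\left(\tfrac{r}{p}\right)$ lies in $\{1,\ldots,k-1\}$.
   Context: $\mathbb{Z}_{k+1}$ is the integers modulo $k+1$. $N_k:=\{\mathbf v\in\mathbb{Z}_{k+1}^k:\ \mathbf v\neq\mathbf 0 \text{ and } \mathbf v \text{ has at least one zero coordinate}\}$. For $x\in\mathbb{R}$, $\{x\}=x-\lfloor x\rfloor$ is the fractional part, and for $t\in\mathbb{R}$, $\mathbf r_k(t):=\big(\lfloor (k+1)\{t\}\rfloor,\lfloor (k+1)\{2t\}\rfloor,\ldots,\lfloor (k+1)\{kt\}\rfloor\big)\in\{0,\ldots,k\}^k$, reduced modulo $k+1$ when added to elements of $\mathbb{Z}_{k+1}^k$. *)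

From HB Require Import structures.
From mathcomp Require Import all_boot all_order all_algebra.
Set Implicit Arguments. Unset Strict Implicit. Unset Printing Implicit Defensive.
Import Order.TTheory GRing.Theory Num.Theory.
Local Open Scope ring_scope.

Definition frac (R : archiDomainType) (x : R) : R := x - (Num.floor x)%:~R.

(* vectors in Z_{k+1}^k, coordinates indexed by 'I_k (index i <-> coordinate i+1) *)
Definition zvec (k : nat) := {ffun 'I_k -> 'Z_(k.+1)}.

Definition in_Nk (k : nat) (v : zvec k) : bool :=
  (v != 0) && [exists i, v i == 0].

Definition rk (k : nat) (t : rat) : zvec k :=
  [ffun i : 'I_k =>
     ((Num.floor ((k.+1)%:R * frac ((i.+1)%:R * t)))%:~R : 'Z_(k.+1))].

From Pilot Require Import Defs.
From HB Require Import structures.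
From mathcomp Require Import all_boot all_order all_algebra finfield.
From mathcomp Require Import zify ring.
Import Order.TTheory GRing.Theory Num.Theory.

(* Write q = k + 1.  Taking r = floor(a p / q) + 1 makes r_k(r / p) equal to
   a * (1, 2, ..., k) modulo q, because k q < p; so it suffices to find s and a
   in F_q with s v_i + a i outside {0, -1} for every i.  If there were no such
   pair, then for each d the map i |-> v_i - d i would either vanish somewhere
   or be onto the nonzero elements (a missed value t != 0 gives s = -1/t,
   a = d/t).  As k is even, prod_i (v_i - d i) = prod_i i * P(d) with
   P = prod_i (X - v_i / i), and in the onto case the left side is also
   prod_i i; hence P takes only the values 0 and 1.  But the monic polynomial P
   of degree q - 1 sums to -1 over F_q, so P has exactly one root, whereas 0 and
   some nonzero v_i / i are both roots. *)

Lemma divn_mul_succ_divn (a p q j : nat) : 0 < q -> j * q < p ->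
  (q * j * ((a * p) %/ q).+1) %/ p = j * a.
Proof.
move=> q_gt0 jq_lt_p; have p_gt0 : 0 < p by lia.
have := divn_eq (a * p) q; have := ltn_mod (a * p) q.
set u := (a * p) %/ q; set w := (a * p) %% q => w_lt ap_eq.
have -> : q * j * u.+1 = j * a * p + j * (q - w) by nia.
rewrite divnMDl // divn_small ?addn0 //.
by apply: leq_ltn_trans jq_lt_p; rewrite leq_mul2l leq_subr orbT.
Qed.

Local Open Scope ring_scope.

Lemma floor_natr_div (R : archiRealFieldType) (n d : nat) : (0 < d)%N ->
  Num.floor (n%:R / d%:R : R) = (n %/ d)%N%:Z.
Proof.
move=> d_gt0; apply: floor_def.
have d_neq0 : (d%:R : R) != 0 by rewrite pnatr_eq0 -lt0n.
have -> : (n%:R : R) = (n %/ d)%:R * d%:R + (n %% d)%:R.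
  by rewrite {1}(divn_eq n d) natrD natrM.
rewrite mulrDl mulfK // intrD -!pmulrn.
rewrite lerDl divr_ge0 ?ler0n //= ltrD2l.
by rewrite ltr_pdivrMr ?ltr0n // mul1r ltr_nat ltn_mod.
Qed.

Lemma floor_natrM_frac (R : archiRealDomainType) (n : nat) (x : R) :
  Num.floor (n%:R * Defs.frac x) = Num.floor (n%:R * x) - n%:Z * Num.floor x.
Proof.
rewrite /Defs.frac mulrBr -[n%:R]/(n%:Z%:~R) -intrM floorDrz ?rpredN ?intr_int //.
by rewrite -intrN intrKfloor.
Qed.

Lemma rkE (k : nat) (t : rat) (i : 'I_k) :
  rk k t i = (Num.floor ((k.+1 * i.+1)%:R * t))%:~R.
Proof.
rewrite ffunE floor_natrM_frac mulrA -natrM rmorphB /= rmorphM /=.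
have k_gt0 : (0 < k)%N by case: i => i /= /(leq_ltn_trans (leq0n i)).
by rewrite -pmulrn pchar_Zp ?ltnS // mul0r subr0.
Qed.

Lemma rk_linear (k p a : nat) : (k * k.+1 < p)%N ->
  exists r : int, forall i : 'I_k, rk k (r%:~R / p%:R) i = (a * i.+1)%:R.
Proof.
move=> kp; have p_gt0 : (0 < p)%N by lia.
exists ((a * p) %/ k.+1).+1%:Z => i.
rewrite rkE mulrA -[_%:Z%:~R]/(_%:R) -natrM floor_natr_div // divn_mul_succ_divn //.
  by rewrite mulnC.
by apply: leq_ltn_trans kp; rewrite leq_mul2r ltn_ord orbT.
Qed.

Section FinFieldPowerSums.

Variable F : finFieldType.

Lemma natr_card_finField : #|F|%:R = 0 :> F.
Proof.
apply: (addrI (\sum_(x : F) x)); rewrite addr0.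
rewrite [in RHS](reindex_inj (addIr 1)) big_split /= sumr_const.
by rewrite -mulr_natr mul1r.
Qed.

Lemma sum_expr_lt m : (m < #|F|.-1)%N -> \sum_(x : F) x ^+ m = 0.
Proof.
case: m => [_ | m lt_m].
  by rewrite (eq_bigr (fun=> 1)) // sumr_const natr_card_finField.
have [g /andP[g_neq0 gm_neq1] | all_roots] :=
  pickP (fun g : F => (g != 0) && (g ^+ m.+1 != 1)).
  (* x |-> g * x permutes F *)
  have /eqP sum_fixed : \sum_(x : F) x ^+ m.+1 = g ^+ m.+1 * \sum_(x : F) x ^+ m.+1.
    rewrite mulr_sumr [in LHS](reindex_inj (mulfI g_neq0)) /=.
    by apply: eq_bigr => x _; rewrite exprMn.
  apply/eqP; move: sum_fixed; rewrite -subr_eq0 -{1}[\sum_x _]mul1r -mulrBl.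
  by rewrite mulf_eq0 subr_eq0 eq_sym (negbTE gm_neq1).
have Xm1_neq0 : ('X^(m.+1) - 1 : {poly F}) != 0 by rewrite -size_poly_eq0 size_XnsubC.
have := max_poly_roots Xm1_neq0 (rs := enum [set~ (0 : F)]).
rewrite enum_uniq size_XnsubC // -cardE (cardsC1 0) ltnS leqNgt lt_m.
suff roots : all (root ('X^(m.+1) - 1)) (enum [set~ (0 : F)]) by move/(_ roots isT).
apply/allP => x; rewrite mem_enum in_setC1 => x_neq0.
have := all_roots x; rewrite /= x_neq0 /= => /negbFE /eqP xm.
by rewrite /root !hornerE xm subrr.
Qed.

Lemma sum_expr_card_pred : \sum_(x : F) x ^+ #|F|.-1 = -1.
Proof.
have card_gt1 := finNzRing_gt1 F.
have card_pred_neq0 : (#|F|.-1 != 0)%N by rewrite -lt0n -ltnS prednK // ltnW.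
rewrite (bigD1 0) //= expr0n (negbTE card_pred_neq0) add0r.
rewrite (eq_bigr (fun=> 1)) => [|x x_neq0]; last first.
  by apply: (mulfI x_neq0); rewrite -exprS prednK ?expf_card ?mulr1 // ltnW.
rewrite sumr_const.
have -> : #|[pred x : F | x != 0]| = #|F|.-1.
  by rewrite -(cardsC1 0); apply: eq_card => x; rewrite in_setC1.
apply/eqP; rewrite -subr_eq0 opprK -mulrSr prednK ?natr_card_finField //.
exact: ltnW.
Qed.

Lemma sum_horner_monic (P : {poly F}) :
  P \is monic -> size P = #|F| -> \sum_(x : F) P.[x] = -1.
Proof.
move=> /monicP lead_P size_P.
have card_gt0 : (0 < #|F|)%N.
  by rewrite -size_P size_poly_gt0 -lead_coef_eq0 lead_P oner_neq0.
under eq_bigr do rewrite horner_coef size_P -(prednK card_gt0).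
rewrite exchange_big big_ord_recr /= big1 ?add0r => [|i _]; last first.
  by rewrite -mulr_sumr sum_expr_lt ?mulr0.
have top_coef : P`_#|F|.-1 = 1 by rewrite -lead_P lead_coefE size_P.
by rewrite -mulr_sumr sum_expr_card_pred top_coef mulrN1.
Qed.

Lemma prod_onto_nonzero (I : finType) (f : I -> F) :
  #|I| = #|F|.-1 -> (forall i, f i != 0) -> (forall t, t != 0 -> exists i, f i = t) ->
  \prod_i f i = \prod_(t | t != 0) t.
Proof.
move=> card_I f_neq0 f_onto.
have im_f : f @: setT = [set~ 0].
  apply/eqP; rewrite eq_sym eqEcard; apply/andP; split.
    by apply/subsetP => t; rewrite in_setC1 => /f_onto[i <-]; apply: imset_f.
  by rewrite cardsC1 -card_I -cardsT leq_imset_card.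
have f_inj : {in setT &, injective f}.
  by apply/imset_injP; rewrite im_f cardsC1 cardsT card_I.
rewrite (eq_bigl (fun t => t \in [set~ 0])) => [|t]; last by rewrite in_setC1.
by rewrite -im_f big_imset //=; apply: eq_bigl => i; rewrite in_setT.
Qed.

End FinFieldPowerSums.

Section PrimeField.

Variable q : nat.
Hypothesis q_prime : prime q.

Local Notation F := 'F_q.

Lemma natr_Fp_eq0 n : (n%:R == 0 :> F) = (q %| n)%N.
Proof. by rewrite (dvdn_pcharf (pchar_Fp q_prime)). Qed.

Lemma val_Fp_lt (x : F) : (x < q)%N.
Proof. by rewrite -[q in (_ < q)%N](Fp_cast q_prime). Qed.

Lemma natr_succ_ord_neq0 (i : 'I_q.-1) : i.+1%:R != 0 :> F.
Proof.
rewrite natr_Fp_eq0; apply/negP => /(dvdn_leq (ltn0Sn i)).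
by have := ltn_ord i; lia.
Qed.

Lemma natr_succ_ord_onto (t : F) : t != 0 -> exists i : 'I_q.-1, i.+1%:R = t.
Proof.
move=> t_neq0; have t_gt0 : (0 < t)%N by rewrite lt0n.
have lt_t : (t.-1 < q.-1)%N by have := val_Fp_lt t; lia.
by exists (Ordinal lt_t); rewrite /= prednK // natr_Zp.
Qed.

Lemma val_Fp_avoid0N1 (y : F) : y \notin [:: 0; -1] -> (1 <= y <= q.-2)%N.
Proof.
rewrite !inE negb_or => /andP[y_neq0 y_neqN1].
have y_gt0 : (0 < y)%N by rewrite lt0n.
have y_ne : (y : nat) != q.-1.
  apply: contra y_neqN1 => /eqP yE; rewrite -subr_eq0 opprK -(natr_Zp y) yE natr1 prednK.
    by rewrite (pchar_Fp_0 q_prime).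
  exact: prime_gt0.
by have := val_Fp_lt y; lia.
Qed.

Hypothesis q_odd : odd q.

Section AffineAvoidance.

Variable v : 'I_q.-1 -> F.

Let e (i : 'I_q.-1) : F := v i / i.+1%:R.
Let E : {set F} := [set e i | i : 'I_q.-1].
Let P : {poly F} := \prod_i ('X - (e i)%:P).

Lemma affine_factor d i : v i - d * i.+1%:R = - i.+1%:R * (d - e i).
Proof. by rewrite /e; field; rewrite addrC natr1 natr_succ_ord_neq0. Qed.

Lemma affine_neq0 d i : d \notin E -> v i - d * i.+1%:R != 0.
Proof.
move=> dE; rewrite affine_factor mulf_neq0 ?oppr_eq0 ?natr_succ_ord_neq0 // subr_eq0.
by apply: contra dE => /eqP ->; apply: imset_f.
Qed.

Lemma avoiding_of_missed d t : d \notin E -> t != 0 ->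
  (forall i, v i - d * i.+1%:R != t) ->
  forall i, - t^-1 * v i + t^-1 * d * i.+1%:R \notin [:: 0; -1].
Proof.
move=> dE t_neq0 missed i.
have -> : - t^-1 * v i + t^-1 * d * i.+1%:R = - t^-1 * (v i - d * i.+1%:R) by ring.
rewrite !inE mulf_eq0 oppr_eq0 invr_eq0 (negbTE t_neq0) (negbTE (affine_neq0 d i dE)) /=.
by rewrite mulNr eqr_opp -[X in _ == X](mulVf t_neq0) (inj_eq (mulfI (invr_neq0 t_neq0))).
Qed.

Lemma prod_affine_horner d :
  \prod_i (v i - d * i.+1%:R) = (\prod_(t : F | t != 0) t) * P.[d].
Proof.
have even_k : ~~ odd q.-1 by move: q_odd; rewrite -(prednK (prime_gt0 q_prime)).
under eq_bigr do rewrite affine_factor.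
rewrite big_split /= prodrN card_ord -signr_odd (negbTE even_k) mul1r.
rewrite horner_prod; congr (_ * _); last by apply: eq_bigr => i _; rewrite hornerXsubC.
apply: prod_onto_nonzero => [|i|t]; last exact: natr_succ_ord_onto.
  by rewrite card_ord card_Fp.
exact: natr_succ_ord_neq0.
Qed.

Lemma horner_in_roots d : d \in E -> P.[d] = 0.
Proof.
case/imsetP => i _ ->; rewrite horner_prod; apply/eqP/prodf_eq0.
by exists i => //; rewrite hornerXsubC subrr.
Qed.

Lemma horner_off_roots d :
  d \notin E -> (forall t, t != 0 -> exists i, v i - d * i.+1%:R = t) -> P.[d] = 1.
Proof.
move=> dE onto.
have prod_neq0 : \prod_(t : F | t != 0) t != 0 by apply/prodf_neq0.
apply: (mulfI prod_neq0); rewrite mulr1 -prod_affine_horner.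
apply: prod_onto_nonzero => // [|i]; first by rewrite card_ord card_Fp.
exact: affine_neq0.
Qed.

Lemma sum_horner_roots : \sum_(d : F) P.[d] = -1.
Proof.
apply: sum_horner_monic; first exact: monic_prod_XsubC.
rewrite size_prod_XsubC /index_enum -enumT size_enum_ord card_Fp //.
exact/prednK/prime_gt0.
Qed.

Lemma card_roots : (exists i, v i != 0) -> (exists i, v i = 0) -> (2 <= #|E| <= q.-1)%N.
Proof.
move=> [i1 vi1_neq0] [i0 vi0]; apply/andP; split; last first.
  by rewrite -[q.-1]card_ord (leq_imset_card e).
have e0 : e i0 = 0 by rewrite /e vi0 mul0r.
have e1 : e i1 != 0 by rewrite /e mulf_neq0 // invr_eq0 natr_succ_ord_neq0.
have sub : [set e i0; e i1] \subset E by apply/subsetP => x /set2P[] ->; apply: imset_f.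
by have := subset_leq_card sub; rewrite cards2 e0 eq_sym e1.
Qed.

Lemma exists_affine_avoiding_0N1 :
  (exists i, v i != 0) -> (exists i, v i = 0) ->
  exists s a : F, forall i, s * v i + a * i.+1%:R \notin [:: 0; -1].
Proof.
move=> v_neq0 v_eq0.
have [/existsP[s /existsP[a /forallP avoid]] | no_avoid] := boolP
  [exists s : F, exists a : F, [forall i, s * v i + a * i.+1%:R \notin [:: 0; -1]]].
  by exists s, a.
have onto d t : d \notin E -> t != 0 -> exists i, v i - d * i.+1%:R = t.
  move=> dE t_neq0.
  have [/existsP[i /eqP <-]|/existsPn missed] := boolP [exists i, v i - d * i.+1%:R == t].
    by exists i.
  case/negP: no_avoid; apply/existsP; exists (- t^-1); apply/existsP; exists (t^-1 * d).
  by apply/forallP; apply: avoiding_of_missed.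
have sum_P : \sum_d P.[d] = #|~: E|%:R.
  rewrite -sum1_card natr_sum [RHS]big_mkcond; apply: eq_bigr => d _ /=.
  rewrite in_setC; have [dE|dE] := boolP (d \in E); first exact: horner_in_roots.
  by apply: horner_off_roots => // t; apply: onto.
move/eqP: sum_horner_roots; rewrite sum_P -subr_eq0 opprK natr1 natr_Fp_eq0.
move=> /(dvdn_leq (ltn0Sn _)).
have card_E : (#|E| + #|~: E| = q)%N by rewrite cardsC card_Fp.
have := card_roots v_neq0 v_eq0; lia.
Qed.

End AffineAvoidance.
End PrimeField.

Theorem lemma4p3 (k p : nat) :
  (0 < k)%N -> prime k.+1 -> odd k.+1 ->
  prime p -> odd p -> (k * k.+1 < p)%N ->
  forall v : zvec k, in_Nk v ->
  exists (s : 'Z_(k.+1)) (r : int),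
    forall i : 'I_k,
      let c := s * v i + rk k (r%:~R / p%:R) i in
      (1 <= (c : nat) <= k.-1)%N.
Proof.
move=> k_gt0 q_prime q_odd _ _ kp v /andP[v_neq0 /existsP[i0 /eqP vi0]].
have q_gt1 : (1 < k.+1)%N by rewrite ltnS.
pose w i : 'F_(k.+1) := (v i : nat)%:R.
have val_w i : w i = v i :> nat.
  rewrite val_Fp_nat // modn_small //.
  by apply: leq_trans (ltn_ord (v i)) _; rewrite Zp_cast.
have [i1 vi1_neq0] : exists i, v i != 0.
  apply/existsP; apply: contraR v_neq0 => /existsPn v0.
  by apply/eqP/ffunP => i; rewrite ffunE; apply/eqP/negPn/v0.
have w_eq0 i : (w i == 0) = (v i == 0) by rewrite -!val_eqE /= val_w.
(* 'Z_(k.+1) has no field structure: work in 'F_(k.+1) and transport through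
   natural-number representatives. *)
have [s [a avoid]] : exists s a : 'F_(k.+1), forall i,
    s * w i + a * i.+1%:R \notin [:: 0; -1].
  by apply: exists_affine_avoiding_0N1 => //; [exists i1 | exists i0; apply/eqP];
    rewrite w_eq0 ?vi0.
have [r rE] := @rk_linear _ _ (a : nat) kp.
exists (s : nat)%:R, r => i; rewrite rE.
set N := (s * v i + a * i.+1)%N.
have -> : (s : nat)%:R * v i + (a * i.+1)%:R = N%:R :> 'Z_(k.+1).
  by rewrite natrD !natrM natr_Zp.
have w_avoid : s * w i + a * i.+1%:R = N%:R :> 'F_(k.+1).
  by rewrite natrD !natrM natr_Zp /w natr_Zp.
rewrite /= val_Zp_nat // -val_Fp_nat // -w_avoid.
exact: val_Fp_avoid0N1.
Qed.
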